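(* Let $A\in\mathbb{R}^{l\times m}$ and $B\in\mathbb{R}^{n\times m}$, and consider the parametrized system $A\,(c\circ x^B)=0$ with parameters $c\in\mathbb{R}^m_{>0}$. Assume $\ker A\cap\mathbb{R}^m_{>0}\neq\emptyset$, $\dim P=1$ and $d=1$. Then the following are equivalent: (1) $|Y_c|\ge1$ for all $c\in\mathbb{R}^m_{>0}$; (2) $\tilde b_1\cdot\tilde b_\omega<0$.
   Context: Notation: for $x\in\mathbb{R}^n_{>0}$ and $y\in\mathbb{R}^n$, $x^y=\prod_{i=1}^n x_i^{y_i}$; for a matrix $B=(b^1,\dots,b^m)\in\mathbb{R}^{n\times m}$, $x^B\in\mathbb{R}^m_{>0}$ is the vector with entries $x^{b^j}$; $\circ$ denotes the componentwise product, and $(\cdot)^{-1}$ applied to a positive vector is componentwise. $1_m\in\mathbb{R}^m$ is the all-ones vector. (One class setting.) The coefficient polytope is $P=\{y\in\ker A\cap\mathbb{R}^m_{>0} : 1_m\cdot y=1\}$. The monomial dependency subspace is $D=\ker\begin{pmatrix}B\\ 1_m^{\mathsf T}\end{pmatrix}\subseteq\mathbb{R}^m$ and the monomial dependency is $d=\dim D$. The solution set on the coefficient polytope is $Y_c=\{y\in P : y^z=c^z \text{ for all } z\in D\}$. When $\dim P=1$, the closure $\overline P=\{y\in\ker A\cap\mathbb{R}^m_{\ge0}: 1_m\cdot y=1\}$ is a line segment with two endpoints $y^1,y^2$; set $q=(y^1-y^2)\circ(y^1+y^2)^{-1}\in\mathbb{R}^m$, and assume (after reordering the indices $\{1,\dots,m\}$)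 that $1=q_1\ge q_2\ge\cdots\ge q_m=-1$. Let $I_1,\dots,I_\omega\subseteq\{1,\dots,m\}$ be the $\omega$ equivalence classes of indices with equal (consecutive) components of $q$, ordered so that the common value $\tilde q_i$ of $q$ on $I_i$ is strictly decreasing in $i$. When $d=1$, let $b\in\mathbb{R}^m$ span $D$, and define the lumped vector $\tilde b\in\mathbb{R}^\omega$ by $\tilde b_i=\sum_{i'\in I_i}b_{i'}$. *)

From HB Require Import structures.
From mathcomp Require Import all_boot all_order all_algebra.
From mathcomp Require Import reals exp.
Set Implicit Arguments. Unset Strict Implicit. Unset Printing Implicit Defensive.
Import Order.TTheory GRing.Theory Num.Theory.
Local Open Scope ring_scope.

Section Defs.
Variable R : realType.

Definition posv (m : nat) (x : 'rV[R]_m) : Prop := forall i, 0 < x 0 i.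
Definition nnegv (m : nat) (x : 'rV[R]_m) : Prop := forall i, 0 <= x 0 i.

Definition in_ker (l m : nat) (A : 'M[R]_(l, m)) (y : 'rV[R]_m) : Prop :=
  A *m y^T = 0.

Definition onesum (m : nat) (y : 'rV[R]_m) : R := \sum_i y 0 i.

Definition mpow (m : nat) (x y : 'rV[R]_m) : R := \prod_i powR (x 0 i) (y 0 i).

Definition coefP (l m : nat) (A : 'M[R]_(l, m)) (y : 'rV[R]_m) : Prop :=
  in_ker A y /\ posv y /\ onesum y = 1.
Definition coefPbar (l m : nat) (A : 'M[R]_(l, m)) (y : 'rV[R]_m) : Prop :=
  in_ker A y /\ nnegv y /\ onesum y = 1.

Definition affine_dim (m : nat) (S : 'rV[R]_m -> Prop) (k : nat) : Prop :=
  exists (p0 : 'rV[R]_m) (V : 'M[R]_(k, m)),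
    S p0 /\ (forall i, S (p0 + row i V)) /\ row_free V /\
    (forall y, S y -> (y - p0 <= V)%MS).

(* the matrix (B ; 1_m^T)^T, so that D = ker (B ; 1_m^T) is the row kernel
   kermx (Dmat B) : z \in D  <->  z *m Dmat B = 0 *)
Definition Dmat (n m : nat) (B : 'M[R]_(n, m)) : 'M[R]_(m, n + 1) :=
  (col_mx B (const_mx 1 : 'M[R]_(1, m)))^T.

Definition in_D (n m : nat) (B : 'M[R]_(n, m)) (z : 'rV[R]_m) : Prop :=
  z *m Dmat B = 0.

Definition mondep (n m : nat) (B : 'M[R]_(n, m)) : nat := \rank (kermx (Dmat B)).

Definition Yc (l n m : nat) (A : 'M[R]_(l, m)) (B : 'M[R]_(n, m))
  (c : 'rV[R]_m) (y : 'rV[R]_m) : Prop :=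
  coefP A y /\ forall z, in_D B z -> mpow y z = mpow c z.

Definition qvec (m : nat) (y1 y2 : 'rV[R]_m) (i : 'I_m) : R :=
  (y1 0 i - y2 0 i) / (y1 0 i + y2 0 i).

Definition Ifirst (m : nat) (y1 y2 : 'rV[R]_m) : {set 'I_m} :=
  [set i | [forall j, qvec y1 y2 j <= qvec y1 y2 i]].
Definition Ilast (m : nat) (y1 y2 : 'rV[R]_m) : {set 'I_m} :=
  [set i | [forall j, qvec y1 y2 i <= qvec y1 y2 j]].

Definition btilde_first (m : nat) (y1 y2 b : 'rV[R]_m) : R :=
  \sum_(i in Ifirst y1 y2) b 0 i.
Definition btilde_last (m : nat) (y1 y2 b : 'rV[R]_m) : R :=
  \sum_(i in Ilast y1 y2) b 0 i.

End Defs.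

From HB Require Import structures.
From mathcomp Require Import all_boot all_order all_algebra.
From mathcomp Require Import reals exp.
From mathcomp Require Import boolp classical_sets topology normedtype sequences.
From mathcomp Require Import ring lra.
Import Order.TTheory GRing.Theory Num.Theory.
Import numFieldNormedType.Exports.
Local Open Scope ring_scope.

(* Both endpoints y1, y2 of Pbar have a vanishing coordinate, so P is the open segment
   y(t) = (1 - t) y1 + t y2, 0 < t < 1.  As D is spanned by b, y(t) lies in Y_c iff
   G(t) := sum_i b_i ln y_i(t) equals ln c^b, and ln c^b takes every real value; hence
   Y_c is nonempty for all c iff G maps (0,1) onto R.  The coordinates with y1_i = 0
   (resp. y2_i = 0) form the class I_omega where q = -1 (resp. I_1 where q = 1), and they
   carry the only singular terms of G: G(t) = b~_omega ln t + b~_1 ln (1 - t) + O(1).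
   A continuous function of this shape is onto R exactly when the two coefficients
   have opposite signs. *)

Section LnPair.
Context {R : realType}.
Implicit Types a b t K L M : R.

Lemma ln_pair_below_pos a b M : 0 < a ->
  exists t, 0 < t < 1 /\ a * ln t + b * ln (1 - t) <= M.
Proof.
move=> a0; have ln2 : 0 < ln (2 : R) by rewrite ln_gt0 // ltr1n.
pose s := ln 2 + (`|M| + `|b| * ln 2) / a.
have s_ge : ln 2 <= s.
  by rewrite lerDl; apply: divr_ge0; rewrite ?addr_ge0 ?mulr_ge0 // ltW.
have as_ge : `|M| + `|b| * ln 2 <= a * s.
  by rewrite /s mulrDr mulrCA divff ?gt_eqF // mulr1 lerDr mulr_ge0 ?ltW.
(* t = exp (- s) <= 1/2 keeps ln (1 - t) in [- ln 2, 0]. *)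
pose t := expR (- s); have t0 : 0 < t by exact: expR_gt0.
have t_half : t <= 2^-1.
  by rewrite /t -[2^-1]lnK ?posrE ?invr_gt0 // lnV ?posrE // ler_expR lerN2.
have ln1t : - ln 2 <= ln (1 - t).
  rewrite -lnV ?posrE // ler_ln ?posrE ?invr_gt0 //; lra.
have bln : b * ln (1 - t) <= `|b| * ln 2.
  apply: le_trans (ler_norm _) _; rewrite normrM ler_wpM2l // ler0_norm.
    by rewrite lerNl.
  by apply: ln_le0; lra.
exists t; split; first by apply/andP; split; lra.
rewrite /t expRK; have := ler_norm (- M); rewrite normrN; lra.
Qed.

Lemma ln_pair_below a b M : a * b < 0 ->
  exists t, 0 < t < 1 /\ a * ln t + b * ln (1 - t) <= M.
Proof.
move=> ab; have [a0|a0] := ltP 0 a; first exact: ln_pair_below_pos.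
have b0 : 0 < b by nra.
have [t [t01 ht]] := ln_pair_below_pos b a M b0.
exists (1 - t); split; first lra.
by rewrite [1 - (1 - t)]subKr addrC.
Qed.

Lemma ln_pair_above a b M : a * b < 0 ->
  exists t, 0 < t < 1 /\ M <= a * ln t + b * ln (1 - t).
Proof.
rewrite -mulrNN => ab; have [t [t01 ht]] := ln_pair_below _ _ (- M) ab.
by exists t; split => //; lra.
Qed.

Lemma ivt_open01 {G : R -> R} {a b L} :
  (forall t, 0 < t < 1 -> {for t, continuous G}) -> 0 < a < 1 -> 0 < b < 1 ->
  Num.min (G a) (G b) <= L <= Num.max (G a) (G b) ->
  exists t, 0 < t < 1 /\ G t = L.
Proof.
move=> Gc; wlog ab : a b / a <= b => [hw a01 b01 hL|a01 b01 hL].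
  have [ab|ba] := leP a b; first exact: (hw a b).
  by apply: (hw b a) => //; [exact: ltW | rewrite minC maxC].
have cG : {within `[a, b], continuous G}%classic.
  apply: continuous_in_subspaceT => x; rewrite inE /= in_itv /= => /andP[ax xb].
  by apply: Gc; lra.
have [c] := IVT ab cG hL; rewrite in_itv /= => /andP[ac cb] Gc_eq.
by exists c; split => //; lra.
Qed.

Lemma onto_of_near_ln_pair {G : R -> R} {a b K} :
  (forall t, 0 < t < 1 -> {for t, continuous G}) ->
  (forall t, 0 < t < 1 -> `|G t - (a * ln t + b * ln (1 - t))| <= K) ->
  a * b < 0 -> forall L, exists t, 0 < t < 1 /\ G t = L.
Proof.
move=> Gc GK ab L.
have [t0 [t0_01 h0]] := ln_pair_below _ _ (L - K) ab.
have [t1 [t1_01 h1]] := ln_pair_above _ _ (L + K) ab.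
have G0 : G t0 <= L by move: (GK _ t0_01); rewrite ler_norml => /andP[_]; lra.
have G1 : L <= G t1 by move: (GK _ t1_01); rewrite ler_norml => /andP[+ _]; lra.
apply: (ivt_open01 Gc t0_01 t1_01).
by rewrite ge_min G0 le_max G1 orbT.
Qed.

Lemma not_onto_of_near_ln_pair {G : R -> R} {a b K} :
  (forall t, 0 < t < 1 -> `|G t - (a * ln t + b * ln (1 - t))| <= K) ->
  0 <= a * b -> exists L, forall t, 0 < t < 1 -> G t != L.
Proof.
move=> GK ab.
have lnt t : 0 < t < 1 -> ln t <= 0 /\ ln (1 - t) <= 0.
  by move=> t01; split; apply: ln_le0; lra.
have [[a0 b0]|[a0 b0]] : 0 <= a /\ 0 <= b \/ a <= 0 /\ b <= 0.
  by have [a0|a0] := leP 0 a; have [b0|b0] := leP 0 b;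
    [left | right; split; nra | right; split; nra | right; split; lra].
- exists (K + 1) => t t01; have [l1 l2] := lnt t t01.
  have := mulr_ge0_le0 a0 l1; have := mulr_ge0_le0 b0 l2.
  move: (GK t t01); rewrite ler_norml => /andP[_ ?] ? ?.
  by apply/eqP => Gt; lra.
- exists (- K - 1) => t t01; have [l1 l2] := lnt t t01.
  have := mulr_le0 a0 l1; have := mulr_le0 b0 l2.
  move: (GK t t01); rewrite ler_norml => /andP[? _] ? ?.
  by apply/eqP => Gt; lra.
Qed.
End LnPair.

Section Mix.
Context {R : realType}.
Implicit Types u v t : R.

Lemma mix_gt0 u v t : 0 <= u -> 0 <= v -> 0 < u + v -> 0 < t < 1 ->
  0 < (1 - t) * u + t * v.
Proof.
move=> u0 v0 uv /andP[t0 t1].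
have tu : 0 <= (1 - t) * u by apply: mulr_ge0; lra.
have tv : 0 <= t * v by apply: mulr_ge0; lra.
have [u_gt0|u_le0] := ltP 0 u.
  have : 0 < (1 - t) * u by apply: mulr_gt0; lra.
  lra.
have : 0 < t * v by apply: mulr_gt0; lra.
lra.
Qed.

Lemma ln_mix_pos u v t : 0 < u -> 0 < v -> 0 <= t <= 1 ->
  `|ln ((1 - t) * u + t * v)| <= `|ln u| + `|ln v|.
Proof.
wlog uv : u v t / u <= v => [hw u0 v0 t01|u0 v0 /andP[t0 t1]].
  have [uv|vu] := leP u v; first exact: (hw u v t).
  have -> : (1 - t) * u + t * v = (1 - (1 - t)) * v + (1 - t) * u by ring.
  by rewrite [X in _ <= X]addrC; apply: hw => //; [exact: ltW | lra].
have w_ge : u <= (1 - t) * u + t * v.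
  have : 0 <= t * (v - u) by apply: mulr_ge0; lra.
  lra.
have w_le : (1 - t) * u + t * v <= v.
  have : 0 <= (1 - t) * (v - u) by apply: mulr_ge0; lra.
  lra.
have w0 : 0 < (1 - t) * u + t * v by apply: lt_le_trans w_ge.
have lo : ln u <= ln ((1 - t) * u + t * v) by rewrite ler_ln ?posrE.
have hi : ln ((1 - t) * u + t * v) <= ln v by rewrite ler_ln ?posrE.
have := ler_norm (ln v); have := ler_norm (- ln u); rewrite normrN.
have := normr_ge0 (ln u); have := normr_ge0 (ln v).
rewrite ler_norml; lra.
Qed.

(* With the library's junk value ln 0 = 0, the bound is |ln| of the nonzero coordinate
   when the other one vanishes. *)
Lemma ln_mix_near u v t : 0 <= u -> 0 <= v -> 0 < u + v -> 0 < t < 1 ->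
  `|ln ((1 - t) * u + t * v) - ((u == 0)%:R * ln t + (v == 0)%:R * ln (1 - t))|
    <= `|ln u| + `|ln v|.
Proof.
move=> u0 v0 uv /andP[t0 t1].
have [u_eq0|u_neq0] := eqVneq u 0.
  move: uv; rewrite u_eq0 add0r => uv.
  rewrite (gt_eqF uv) mul1r mul0r addr0 mulr0 add0r.
  by rewrite lnM ?posrE // addrAC subrr add0r ler_wpDl.
have [v_eq0|v_neq0] := eqVneq v 0.
  move: uv; rewrite v_eq0 addr0 => uv.
  rewrite mul1r mul0r add0r mulr0 addr0.
  by rewrite lnM ?posrE ?subr_gt0 // addrAC subrr add0r ler_wpDr.
rewrite !mul0r addr0 subr0.
have u_gt0 : 0 < u by rewrite lt_neqAle eq_sym u_neq0.
have v_gt0 : 0 < v by rewrite lt_neqAle eq_sym v_neq0.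
by apply: ln_mix_pos => //; rewrite !ltW.
Qed.
End Mix.

Section LnMonomial.
Context {R : realType} {m : nat}.
Implicit Types b c u v y z : 'rV[R]_m.

Definition lnmpow y z : R := \sum_i z 0 i * ln (y 0 i).

Lemma mpow_expR y z : posv y -> mpow y z = expR (lnmpow y z).
Proof.
move=> y_gt0; rewrite /mpow /lnmpow expR_sum; apply: eq_bigr => i _.
by rewrite /powR gt_eqF ?y_gt0.
Qed.

Lemma lnmpowZ y (a : R) z : lnmpow y (a *: z) = a * lnmpow y z.
Proof. by rewrite /lnmpow mulr_sumr; apply: eq_bigr => i _; rewrite mxE mulrA. Qed.

Lemma lnmpow_onto b L : b != 0 -> exists c, posv c /\ lnmpow c b = L.
Proof.
case/rV0Pn => i bi; exists (\row_k expR (if k == i then L / b 0 i else 0)); split.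
  by move=> k; rewrite mxE expR_gt0.
rewrite /lnmpow (bigD1 i) //= mxE eqxx expRK mulrC divfK // big1 ?addr0 //.
by move=> k /negbTE ki; rewrite mxE ki expR0 ln1 mulr0.
Qed.

Lemma continuous_lnmpow_segment u v b t :
  (forall i, 0 < (1 - t) * u 0 i + t * v 0 i) ->
  {for t, continuous (fun s : R => lnmpow ((1 - s) *: u + s *: v) b)}.
Proof.
move=> pos; have -> : (fun s : R => lnmpow ((1 - s) *: u + s *: v) b) =
    fun s : R => \sum_i b 0 i * ln ((1 - s) * u 0 i + s * v 0 i).
  by apply/funext => s; apply: eq_bigr => i _; rewrite !mxE.
apply: (@cvg_big R^o _ +%R 0 predT pseudometric_normed_Zmodule.add_continuous) => // i _.
apply: cvgM; first exact: cvg_cst.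
have mix_cont : {for t, continuous (fun s : R => (1 - s) * u 0 i + s * v 0 i)}.
  apply: cvgD; apply: cvgM; try exact: cvg_cst; try exact: cvg_id.
  by apply: cvgB; [exact: cvg_cst | exact: cvg_id].
exact: (continuous_comp mix_cont (continuous_ln (pos i))).
Qed.

Lemma lnmpow_segment_near {u v} b :
  (forall i, 0 <= u 0 i /\ 0 <= v 0 i) -> (forall i, 0 < u 0 i + v 0 i) ->
  forall t, 0 < t < 1 ->
  `|lnmpow ((1 - t) *: u + t *: v) b -
     ((\sum_(i in [set i | u 0 i == 0]) b 0 i) * ln t +
      (\sum_(i in [set i | v 0 i == 0]) b 0 i) * ln (1 - t))|
  <= \sum_i `|b 0 i| * (`|ln (u 0 i)| + `|ln (v 0 i)|).
Proof.
move=> nn pos t t01.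
rewrite /lnmpow !mulr_suml 2!(big_mkcond (fun i => i \in _)) -big_split -sumrB /=.
apply: le_trans (ler_norm_sum _ _ _) _; apply: ler_sum => i _.
have [u0 v0] := nn i; have := @ln_mix_near _ _ _ _ u0 v0 (pos i) t01.
rewrite !inE !mxE; case: (u 0 i == 0); case: (v 0 i == 0) => /=;
  rewrite ?(mul1r, mul0r, mulr0, addr0, add0r, subr0) -?mulrDr -?mulrBr normrM => h;
  exact: ler_wpM2l.
Qed.
End LnMonomial.

Section SolutionSet.
Context {R : realType} {l n m : nat} {A : 'M[R]_(l, m)} {B : 'M[R]_(n, m)}.
Context {b : 'rV[R]_m}.
Hypothesis b_spans_D : (b == kermx (Dmat B))%MS.

Lemma Yc_iff c y : posv c -> Yc A B c y <-> coefP A y /\ lnmpow y b = lnmpow c b.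
Proof.
move=> c_gt0; have /eqmxP eqb := b_spans_D.
split => [[Py eq_D]|[Py eq_b]]; have y_gt0 : posv y by case: Py => _ [].
  split => //; apply: expR_inj; rewrite -!mpow_expR //; apply: eq_D.
  by apply/sub_kermxP; rewrite eqb.
split => // z /sub_kermxP; rewrite -eqb => /submxP[a ->].
by rewrite (mx11_scalar a) mul_scalar_mx !mpow_expR // !lnmpowZ eq_b.
Qed.

Lemma Yc_solvable_iff_onto {u v : 'rV[R]_m} : b != 0 ->
  (forall y, coefP A y <-> exists t, 0 < t < 1 /\ y = (1 - t) *: u + t *: v) ->
  (forall c, posv c -> exists y, Yc A B c y) <->
  (forall L, exists t, 0 < t < 1 /\ lnmpow ((1 - t) *: u + t *: v) b = L).
Proof.
move=> b_neq0 P_seg; split => [solvable L | onto c c_gt0].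
  have [c [c_gt0 <-]] := lnmpow_onto b L b_neq0.
  have [y /(Yc_iff c y c_gt0) [/P_seg[t [t01 ->]] <-]] := solvable c c_gt0.
  by exists t.
have [t [t01 eq_t]] := onto (lnmpow c b).
exists ((1 - t) *: u + t *: v); apply/(Yc_iff _ _ c_gt0); split => //.
by apply/P_seg; exists t.
Qed.
End SolutionSet.

Section PositiveVectors.
Context {R : realType} {m : nat}.
Implicit Types u v y : 'rV[R]_m.

Lemma onesum_gt0 y (i : 'I_m) : posv y -> 0 < onesum y.
Proof.
move=> y_gt0; rewrite /onesum (bigD1 i) //=.
by rewrite ltr_wpDr ?y_gt0 // sumr_ge0 // => j _; rewrite ltW.
Qed.

Lemma nnegv_extend u v : posv u -> nnegv v ->
  exists2 e : R, 0 < e & nnegv (u + e *: (u - v)).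
Proof.
move=> u_gt0 v_ge0; pose S := \sum_k v 0 k / u 0 k.
(* e = 1 / (1 + S) ensures e * v_k <= u_k for every k. *)
have vu_le k : v 0 k / u 0 k <= S.
  by rewrite /S (bigD1 k) //= lerDl sumr_ge0 // => j _; rewrite divr_ge0 // ltW.
have S_ge0 : 0 <= S by rewrite sumr_ge0 // => j _; rewrite divr_ge0 // ltW.
pose e := (1 + S)^-1; have e_gt0 : 0 < e by rewrite invr_gt0; lra.
exists e => // k; rewrite !mxE.
have ev_le : e * v 0 k <= u 0 k.
  move: (vu_le k) (u_gt0 k); rewrite ler_pdivrMr // => vS uk.
  by rewrite /e mulrC ler_pdivrMr; lra.
have := mulr_ge0 (ltW e_gt0) (ltW (u_gt0 k)); lra.
Qed.
End PositiveVectors.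

Section Segment.
Context {R : realType} {l m : nat} (A : 'M[R]_(l, m)).
Implicit Types u v y : 'rV[R]_m.

Definition Pbar_segment u v := forall y,
  coefPbar A y <-> exists t : R, 0 <= t <= 1 /\ y = (1 - t) *: u + t *: v.

Lemma Pbar_segmentC {u v} : Pbar_segment u v -> Pbar_segment v u.
Proof.
move=> seg y; rewrite seg; split => -[t [t01 ->]]; exists (1 - t);
  by split; [lra | rewrite subKr addrC].
Qed.

Lemma Pbar_segment_start {u v} : Pbar_segment u v -> coefPbar A u.
Proof.
move=> seg; apply/seg; exists 0; rewrite lexx ler01.
by rewrite subr0 scale1r scale0r addr0.
Qed.

Lemma Pbar_segment_ge0 {u v} : Pbar_segment u v -> forall i, 0 <= u 0 i /\ 0 <= v 0 i.
Proof.
move=> seg i; have [_ [u_ge0 _]] := Pbar_segment_start seg.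
by have [_ [v_ge0 _]] := Pbar_segment_start (Pbar_segmentC seg).
Qed.

Lemma coefP_normalize y (i : 'I_m) : in_ker A y -> posv y ->
  coefP A ((onesum y)^-1 *: y).
Proof.
move=> ky y_gt0; have s_gt0 := onesum_gt0 _ i y_gt0.
split; first by rewrite /in_ker linearZ /= -scalemxAr ky scaler0.
split; first by move=> j; rewrite mxE mulr_gt0 ?invr_gt0 ?y_gt0.
rewrite /onesum; under eq_bigr do rewrite mxE.
by rewrite -mulr_sumr mulVf // gt_eqF.
Qed.

Lemma Pbar_segment_support {u v} : Pbar_segment u v ->
  (exists y, in_ker A y /\ posv y) -> forall i, 0 < u 0 i + v 0 i.
Proof.
move=> seg [y [ky y_gt0]] i.
have [ny_ker [ny_gt0 ny_sum]] := coefP_normalize _ i ky y_gt0.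
have /seg[t [/andP[t0 t1] eq_t]] : coefPbar A ((onesum y)^-1 *: y).
  by split=> //; split=> // j; rewrite ltW.
have := ny_gt0 i; rewrite eq_t !mxE; have [u0 v0] := Pbar_segment_ge0 seg i.
have := mulr_ge0 t0 u0; have : 0 <= (1 - t) * v 0 i by rewrite mulr_ge0 // subr_ge0.
lra.
Qed.

Lemma coefPbar_extend u v (e : R) : coefPbar A u -> coefPbar A v ->
  nnegv (u + e *: (u - v)) -> coefPbar A (u + e *: (u - v)).
Proof.
move=> [ku [_ su]] [kv [_ sv]] nn; split; last split => //.
  rewrite /in_ker linearD linearZ linearB /= mulmxDr -scalemxAr mulmxBr.
  by rewrite ku kv subrr scaler0 addr0.
rewrite /onesum in su sv *; under eq_bigr do rewrite !mxE.
by rewrite big_split /= -mulr_sumr sumrB su sv subrr mulr0 addr0.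
Qed.

(* If u > 0 then Pbar would extend beyond u, along the direction u - v. *)
Lemma Pbar_segment_zero {u v} : Pbar_segment u v -> u != v -> exists i, u 0 i = 0.
Proof.
move=> seg uv; have [i /eqP ui|no_zero] := pickP (fun i => u 0 i == 0).
  by exists i.
exfalso; have nn := Pbar_segment_ge0 seg.
have u_gt0 : posv u by move=> i; rewrite lt_neqAle eq_sym no_zero; case: (nn i).
have [e e_gt0 ext_ge0] := nnegv_extend u v u_gt0 (fun i => (nn i).2).
have := coefPbar_extend u v e (Pbar_segment_start seg)
  (Pbar_segment_start (Pbar_segmentC seg)) ext_ge0.
case/seg => t [/andP[t0 _] eq_t].
have : (t + e) *: (u - v) = (u + e *: (u - v)) - ((1 - t) *: u + t *: v).
  by apply/rowP => k; rewrite !mxE; ring.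
rewrite -eq_t subrr => /eqP; rewrite scaler_eq0 subr_eq0 (negbTE uv) orbF.
by apply/negP; rewrite gt_eqF //; lra.
Qed.

Lemma coefP_open_segment {u v} : Pbar_segment u v ->
  (exists i, u 0 i = 0) -> (exists j, v 0 j = 0) -> (forall i, 0 < u 0 i + v 0 i) ->
  forall y, coefP A y <-> exists t, 0 < t < 1 /\ y = (1 - t) *: u + t *: v.
Proof.
move=> seg [i ui] [j vj] pos y; split.
  move=> [ky [y_gt0 sy]].
  have /seg[t [/andP[t0 t1] ey]] : coefPbar A y by split=> //; split=> // k; rewrite ltW.
  exists t; split => //; move: (y_gt0 i) (y_gt0 j); rewrite ey !mxE ui vj.
  rewrite !mulr0 addr0 add0r => pi pj; apply/andP; split.
    rewrite lt_neqAle t0 andbT eq_sym; apply: contraTneq pi => ->.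
    by rewrite mul0r ltxx.
  rewrite lt_neqAle t1 andbT; apply: contraTneq pj => ->.
  by rewrite subrr mul0r ltxx.
move=> [t [t01 ey]].
have [ky [_ sy]] : coefPbar A y by apply/seg; exists t; split => //; lra.
split => //; split => // k; rewrite ey !mxE.
by have [u0 v0] := Pbar_segment_ge0 seg k; apply: mix_gt0.
Qed.
End Segment.

Section Classes.
Context {R : realType} {m : nat}.
Implicit Types u v : 'rV[R]_m.

Lemma qvec_swap u v k : qvec v u k = - qvec u v k.
Proof. by rewrite /qvec -mulNr opprB [u 0 k + _]addrC. Qed.

Lemma Ilast_zero u v : (forall i, 0 <= u 0 i /\ 0 <= v 0 i) ->
  (forall i, 0 < u 0 i + v 0 i) -> (exists i, u 0 i = 0) ->
  Ilast u v = [set i | u 0 i == 0].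
Proof.
move=> nn pos [i0 ui0]; apply/setP => i; rewrite !inE.
have q_ge k : -1 <= qvec u v k.
  by rewrite /qvec ler_pdivlMr //; have [] := nn k; lra.
have q_le k : qvec u v k <= -1 -> u 0 k = 0.
  by rewrite /qvec ler_pdivrMr //; have [] := nn k; lra.
have q_zero k : u 0 k = 0 -> qvec u v k = -1.
  move=> uk; have := pos k; rewrite /qvec uk sub0r add0r => vk.
  by rewrite mulNr divff // gt_eqF.
apply/forallP/eqP => [q_min | ui j]; last by rewrite q_zero.
by apply: q_le; rewrite -(q_zero _ ui0); exact: q_min.
Qed.

Lemma Ifirst_zero u v : (forall i, 0 <= u 0 i /\ 0 <= v 0 i) ->
  (forall i, 0 < u 0 i + v 0 i) -> (exists i, v 0 i = 0) ->
  Ifirst u v = [set i | v 0 i == 0].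
Proof.
move=> nn pos v0; rewrite -(@Ilast_zero v u) //; last first.
- by move=> i; rewrite addrC.
- by move=> i; have [] := nn i.
apply/setP => i; rewrite !inE; apply: eq_forallb => j.
by rewrite !(qvec_swap u v) lerN2.
Qed.
End Classes.

Theorem theorem3 (R : realType) (l n m : nat)
  (A : 'M[R]_(l, m)) (B : 'M[R]_(n, m)) (y1 y2 b : 'rV[R]_m) :
  (exists y : 'rV[R]_m, in_ker A y /\ posv y) ->
  affine_dim (coefP A) 1 ->
  mondep B = 1%N ->
  y1 != y2 ->
  (forall y, coefPbar A y <->
     exists t : R, 0 <= t <= 1 /\ y = (1 - t) *: y1 + t *: y2) ->
  (b == kermx (Dmat B))%MS ->
  ((forall c : 'rV[R]_m, posv c -> exists y, Yc A B c y) <->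
   btilde_first y1 y2 b * btilde_last y1 y2 b < 0).
Proof.
move=> P_ne _ rank_D y12 seg b_spans_D.
have nn := Pbar_segment_ge0 A seg; have pos := Pbar_segment_support A seg P_ne.
have z1 := Pbar_segment_zero A seg y12.
have z2 : exists j, y2 0 j = 0.
  by apply: (Pbar_segment_zero A (Pbar_segmentC A seg)); rewrite eq_sym.
have b_neq0 : b != 0.
  by apply/eqP => b0; move: rank_D; rewrite /mondep -(eqmx_rank b_spans_D) b0 mxrank0.
rewrite /btilde_first /btilde_last Ifirst_zero // Ilast_zero //.
rewrite (Yc_solvable_iff_onto b_spans_D b_neq0 (coefP_open_segment A seg z1 z2 pos)).
have near := lnmpow_segment_near b nn pos.
split => [onto | b_lt0].
  rewrite mulrC ltNge; apply/negP => b_ge0.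
  have [L not_L] := not_onto_of_near_ln_pair near b_ge0.
  by have [t [t01 /eqP]] := onto L; rewrite (negbTE (not_L t t01)).
apply: (onto_of_near_ln_pair _ near); last by rewrite mulrC.
move=> t t01; apply: continuous_lnmpow_segment => i.
by have [u0 v0] := nn i; apply: mix_gt0.
Qed.
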